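(* Let $\mathcal{M}$, $f,h_1,h_2,\psi$ be as in the context, and let $\{(x_k,y_k,z_k,\lambda_k,\gamma_k,\sigma_k)\}$ be any sequence generated by Algorithm ALM described in the context (i.e., at every iteration a point $x_k$ satisfying the subproblem conditions is found). Then $$\lim_{k\to\infty}\big(\|h_1(x_k)-y_k\|_2+\|h_2(x_k)-z_k\|_2\big)=0.$$ Consequently, if $x_*\in\mathcal{M}$ is an accumulation point of $\{x_k\}$, then $(x_*,h_1(x_* ),h_2(x_* ))$ is a feasible accumulation point of $\{(x_k,y_k,z_k)\}$ (feasible meaning $h_2(x_* )\le 0$). Moreover, $\{x_k\}$ always has an accumulation point if $\mathcal{M}$ is compact.
   Context: Standing assumptions: $\mathcal{M}$ is a complete smooth Riemannian manifold; $f:\mathcal{M}\to\mathbb{R}$, $h_1:\mathcal{M}\to\mathbb{R}^m$, $h_2:\mathcal{M}\to\mathbb{R}^q$ are continuously differentiable; $\psi:\mathbb{R}^m\to\mathbb{R}$ is convex; and $f(x)+\psi(y)$ is bounded below on $\mathcal{M}\times\mathbb{R}^m$. The problem is $\min\{f(x)+\psi(h_1(x))\}$ s.t. $x\in\mathcal{M}$, $h_2(x)\le 0$, reformulated as $\min f(x)+\psi(y)$ s.t. $x\in\mathcal{M}$, $y=h_1(x)$, $z=h_2(x)$, $z\le 0$. For a closed proper convex $g$ on $\mathbb{R}^n$ and $\sigma>0$: $g^\sigma(u):=\min_w\{g(w)+\frac{\sigma}{2}\|u-w\|_2^2\}$ (Moreau–Yosida regularization) and $\mathrm{prox}_{g/\sigma}(u):=\arg\min_w\{g(w)+\frac{\sigma}{2}\|u-w\|_2^2\}$.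 $\delta_{\mathbb{R}^q_-}$ is the indicator of $\mathbb{R}^q_-=\{z\le 0\}$ and $\Pi_{\mathbb{R}^q_-}$ the Euclidean projection onto it. The augmented Lagrangian is $L_\sigma(x,y,z,\lambda,\gamma)=f(x)+\psi(y)+\frac{\sigma}{2}\|h_1(x)-y+\lambda/\sigma\|_2^2+\frac{\sigma}{2}\|h_2(x)-z+\gamma/\sigma\|_2^2-\frac{\|\lambda\|_2^2+\|\gamma\|_2^2}{2\sigma}$. Algorithm ALM: choose $x_0\in\mathcal{M}$, $\gamma_0\in\mathbb{R}^q_+$, $\lambda_0\in\mathbb{R}^m$, $\sigma_0>0$, $\alpha,\tau\in(0,1)$, $\rho>1$, and a sequence $\varepsilon_k\ge 0$ with $\varepsilon_k\to 0$. Let $y_0=\mathrm{prox}_{\psi/\sigma_0}(h_1(x_0)+\lambda_0/\sigma_0)$, $z_0=\Pi_{\mathbb{R}^q_-}(h_2(x_0)+\gamma_0/\sigma_0)$, $\delta_0=\max\{\|h_1(x_0)-y_0\|_2,\|h_2(x_0)-z_0\|_2\}$. Choose a feasible $x_{\rm feas}\in\mathcal{M}$ ($h_2(x_{\rm feas})\le0$) and $\Phi\ge\max\{f(x_{\rm feas})+\psi(h_1(x_{\rm feas})),L_{\sigma_0}(x_0,y_0,z_0,\lambda_0,\gamma_0)\}$. For $k=1,2,\dots$ (with current values $\lambda_k,\gamma_k,\sigma_k$; at $k=1$ these are $\lambda_0,\gamma_0,\sigma_0$): (i) find $x_k\in\mathcal{M}$ with $\|\mathrm{grad}\,L_k(x_k)\|<\varepsilon_k$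 and $L_k(x_k)\le\Phi$, where $L_k(x)=f(x)+\psi^{\sigma_k}(h_1(x)+\lambda_k/\sigma_k)+\delta^{\sigma_k}_{\mathbb{R}^q_-}(h_2(x)+\gamma_k/\sigma_k)$ and $\mathrm{grad}$ is the Riemannian gradient; (ii) $y_k=\mathrm{prox}_{\psi/\sigma_k}(h_1(x_k)+\lambda_k/\sigma_k)$, $z_k=\Pi_{\mathbb{R}^q_-}(h_2(x_k)+\gamma_k/\sigma_k)$; (iii) $\lambda_{k+1}=\lambda_k+\sigma_k(h_1(x_k)-y_k)$, $\gamma_{k+1}=\gamma_k+\sigma_k(h_2(x_k)-z_k)$; (iv) $\delta_k=\max\{\|h_1(x_k)-y_k\|_2,\|h_2(x_k)-z_k\|_2\}$; if $\delta_k\le\tau\delta_{k-1}$ then $\sigma_{k+1}=\sigma_k$, otherwise $\sigma_{k+1}=\max\{\rho\sigma_k,\|\lambda_{k+1}\|_2^{1+\alpha},\|\gamma_{k+1}\|_2^{1+\alpha}\}$. *)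

From HB Require Import structures.
From mathcomp Require Import all_boot all_order all_algebra.
From mathcomp Require Import all_classical all_reals all_analysis.
Set Implicit Arguments.
Unset Strict Implicit.
Unset Printing Implicit Defensive.
Import Order.TTheory GRing.Theory Num.Theory.
Import numFieldNormedType.Exports.
Local Open Scope classical_set_scope.
Local Open Scope ring_scope.

Definition norm2 (R : realType) (n : nat) (v : 'rV[R]_n) : R :=
  Num.sqrt (\sum_(i < n) (v ord0 i) ^+ 2).

Definition nonpos (R : realType) (n : nat) (v : 'rV[R]_n) : Prop :=
  forall i, v ord0 i <= 0.

Definition convex_fun (R : realType) (n : nat) (g : 'rV[R]_n -> R) : Prop :=
  forall (u v : 'rV[R]_n) (t : R), 0 <= t -> t <= 1 ->
    g (t *: u + (1 - t) *: v) <= t * g u + (1 - t) * g v.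

Definition moreau (R : realType) (n : nat) (g : 'rV[R]_n -> R) (s : R)
  (u : 'rV[R]_n) : R :=
  inf [set g w + s / 2 * (norm2 (u - w)) ^+ 2 | w in [set: 'rV[R]_n]].

Definition is_prox (R : realType) (n : nat) (g : 'rV[R]_n -> R) (s : R)
  (u p : 'rV[R]_n) : Prop :=
  forall w, g p + s / 2 * (norm2 (u - p)) ^+ 2 <= g w + s / 2 * (norm2 (u - w)) ^+ 2.

Definition moreau_nonpos (R : realType) (n : nat) (s : R) (u : 'rV[R]_n) : R :=
  inf [set s / 2 * (norm2 (u - w)) ^+ 2 | w in @nonpos R n].

Definition is_proj_nonpos (R : realType) (n : nat) (u p : 'rV[R]_n) : Prop :=
  nonpos p /\ forall w, nonpos w -> norm2 (u - p) <= norm2 (u - w).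

Definition aug_lag (R : realType) (M : Type) (m q : nat) (f : M -> R)
  (psi : 'rV[R]_m -> R) (h1 : M -> 'rV[R]_m) (h2 : M -> 'rV[R]_q)
  (s : R) (x : M) (y : 'rV[R]_m) (z : 'rV[R]_q) (lam : 'rV[R]_m) (gam : 'rV[R]_q) : R :=
  f x + psi y + s / 2 * (norm2 (h1 x - y + s^-1 *: lam)) ^+ 2
      + s / 2 * (norm2 (h2 x - z + s^-1 *: gam)) ^+ 2
      - ((norm2 lam) ^+ 2 + (norm2 gam) ^+ 2) / (2 * s).

Definition subprob (R : realType) (M : Type) (m q : nat) (f : M -> R)
  (psi : 'rV[R]_m -> R) (h1 : M -> 'rV[R]_m) (h2 : M -> 'rV[R]_q)
  (s : R) (lam : 'rV[R]_m) (gam : 'rV[R]_q) (x : M) : R :=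
  f x + moreau psi s (h1 x + s^-1 *: lam) + moreau_nonpos s (h2 x + s^-1 *: gam).

Definition alm_delta (R : realType) (M : Type) (m q : nat)
  (h1 : M -> 'rV[R]_m) (h2 : M -> 'rV[R]_q)
  (x : nat -> M) (y : nat -> 'rV[R]_m) (z : nat -> 'rV[R]_q) (k : nat) : R :=
  Num.max (norm2 (h1 (x k) - y k)) (norm2 (h2 (x k) - z k)).

Definition acc_point (T : topologicalType) (u : nat -> T) (a : T) : Prop :=
  exists phi : nat -> nat, (forall n, (phi n < phi n.+1)%N) /\
    (fun n => u (phi n)) @ \oo --> a.

From HB Require Import structures.
From mathcomp Require Import all_boot all_order all_algebra.
From mathcomp Require Import all_classical all_reals all_analysis.
From mathcomp Require Import lra.
Import Order.TTheory GRing.Theory Num.Theory.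
Import numFieldNormedType.Exports.
Local Open Scope classical_set_scope.
Local Open Scope ring_scope.

(* For k >= 1 the bound L_k(x_k) <= Phi and the lower bound f + psi >= c give
   sigma_k/2 ||u - prox(u)||^2 <= Phi - c for both proximal terms of L_k. The
   updated multipliers are sigma_k times these proximal residuals, so
   ||lambda_(k+1)||^2 and ||gamma_(k+1)||^2 are at most 2 (Phi - c) sigma_k; as
   h1(x_k) - y_k = (lambda_(k+1) - lambda_k) / sigma_k (and likewise for h2),
   delta_k^2 <= 8 (Phi - c) / sigma_k from k = 2 on. Either delta_k <= tau
   delta_(k-1) eventually, and delta_k -> 0 geometrically, or sigma is enlarged
   by the factor rho infinitely often, so sigma_k -> +oo and again delta_k -> 0.
   Continuity of h1, h2 and closedness of R^q_- then handle accumulation points,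
   and in a compact M a cluster point of (x_k) is the limit of a subsequence. *)

Section norm2.
Context {R : realType} {n : nat}.
Implicit Types (a : R) (u v : 'rV[R]_n).

Lemma norm2_ge0 v : 0 <= norm2 v.
Proof. exact: sqrtr_ge0. Qed.

Lemma norm2_sqr v : norm2 v ^+ 2 = \sum_(i < n) v ord0 i ^+ 2.
Proof. by rewrite sqr_sqrtr // sumr_ge0 // => i _; exact: sqr_ge0. Qed.

Lemma norm2_sqrZ a v : norm2 (a *: v) ^+ 2 = a ^+ 2 * norm2 v ^+ 2.
Proof.
rewrite !norm2_sqr mulr_sumr; apply: eq_bigr => i _.
by rewrite mxE exprMn.
Qed.

Lemma norm2_sqrB_le u v : norm2 (u - v) ^+ 2 <= 2 * (norm2 u ^+ 2 + norm2 v ^+ 2).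
Proof.
rewrite !norm2_sqr -big_split mulr_sumr /=; apply: ler_sum => i _.
rewrite !mxE; have := sqr_ge0 (u ord0 i + v ord0 i); nra.
Qed.

Lemma norm2_entry_le v i : `|v ord0 i| <= norm2 v.
Proof.
rewrite -ler_sqr ?nnegrE ?norm2_ge0 // real_normK ?num_real //.
rewrite norm2_sqr (bigD1 i) //= lerDl.
by apply: sumr_ge0 => j _; exact: sqr_ge0.
Qed.

Lemma mx_norm_le_norm2 v : `|v| <= norm2 v.
Proof.
rewrite (_ : `|v| = mx_norm v) // mx_normrE; apply/bigmax_leP.
split=> [|[i j] _ /=]; first exact: norm2_ge0.
by rewrite (ord1 i); exact: norm2_entry_le.
Qed.

End norm2.

Section moreau.
Context {R : realType} {n : nat}.
Implicit Types (s : R) (u p : 'rV[R]_n).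

Lemma moreau_ge_prox {g : 'rV[R]_n -> R} {s u p} : is_prox g s u p ->
  g p + s / 2 * norm2 (u - p) ^+ 2 <= moreau g s u.
Proof.
move=> prox_p; apply: lb_le_inf; first by eexists; exists p.
by move=> _ [w _ <-]; exact: prox_p.
Qed.

Lemma moreau_nonpos_ge_proj {s u p} : 0 <= s -> is_proj_nonpos u p ->
  s / 2 * norm2 (u - p) ^+ 2 <= moreau_nonpos s u.
Proof.
move=> s_ge0 [p_le0 p_min]; apply: lb_le_inf; first by eexists; exists p.
move=> _ [w w_le0 <-]; rewrite ler_wpM2l ?divr_ge0 //.
by rewrite ler_sqr ?nnegrE ?norm2_ge0 // p_min.
Qed.

End moreau.

Section real_sequences.
Context {R : realType}.
Implicit Types (u s : R ^nat).

Lemma geometric_decay_cvg0 {tau : R} {u N} : 0 <= tau < 1 -> (forall k, 0 <= u k) ->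
  (forall k, (N <= k)%N -> u k.+1 <= tau * u k) -> u @ \oo --> 0.
Proof.
move=> /andP[tau_ge0 tau_lt1] u_ge0 u_decay.
have u_geo j : u (j + N)%N <= tau ^+ j * u N.
  elim: j => [|j IHj]; first by rewrite expr0 mul1r.
  rewrite addSn exprS -mulrA (le_trans (u_decay _ (leq_addl _ _))) //.
  by rewrite ler_wpM2l.
rewrite -(cvg_shiftn N).
apply: (squeeze_cvgr (f := cst 0) (h := fun j => tau ^+ j * u N)).
- by apply: nearW => j /=; rewrite u_ge0 u_geo.
- exact: cvg_cst.
- by rewrite -(mul0r (u N)); apply: cvgMl; apply: cvg_expr; rewrite ger0_norm.
Qed.

Lemma nondecreasing_often_scaled_dvg {rho : R} {s} : 1 < rho -> 0 < s 0%N ->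
  nondecreasing_seq s -> (forall N, exists2 k, (N <= k)%N & rho * s k <= s k.+1) ->
  s @ \oo --> +oo.
Proof.
move=> rho_gt1 s0_gt0 s_nd s_scaled; apply: nondecreasing_dvgn_lt => // s_cvg.
have s_le k : s k <= limn s := nondecreasing_cvgn_le s_nd s_cvg k.
have lim_gt0 : 0 < limn s := lt_le_trans s0_gt0 (s_le 0%N).
have [N _ sN] : \forall k \near \oo, limn s < rho * s k.
  apply: (cvgr_gt (rho * limn s)); first exact: cvgMr.
  by rewrite ltr_pMl.
have [k Nk sk] := s_scaled N.
by have := lt_le_trans (sN _ Nk) (le_trans sk (s_le k.+1)); rewrite ltxx.
Qed.

Lemma safeguarded_penalty_cvg0 {tau rho C : R} {s d : R ^nat} :
  0 <= tau < 1 -> 1 < rho -> 0 < s 0%N -> nondecreasing_seq s ->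
  (forall k, 0 <= d k) -> (\forall k \near \oo, d k ^+ 2 <= C / s k) ->
  (forall k, d k.+1 <= tau * d k \/ rho * s k.+1 <= s k.+2) ->
  d @ \oo --> 0.
Proof.
move=> tau01 rho_gt1 s0_gt0 s_nd d_ge0 d_small d_or_s.
have [[N d_decay]|] := pselect (exists N, forall k, (N <= k)%N -> d k.+1 <= tau * d k).
  exact: geometric_decay_cvg0 tau01 d_ge0 d_decay.
move=> /forallNP d_slow; have s_oo : s @ \oo --> +oo.
  apply: nondecreasing_often_scaled_dvg rho_gt1 s0_gt0 s_nd _ => N.
  have /existsNP[k /not_implyP[Nk d_k]] := d_slow N.
  by exists k.+1; [exact: leqW | case: (d_or_s k) => // /d_k].
apply/cvgrPdist_le => e e_gt0; near=> k.
rewrite sub0r normrN ger0_norm // -ler_sqr ?nnegrE ?(ltW e_gt0) //.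
rewrite (le_trans (near d_small k _)) // ler_pdivrMr; last first.
  by apply: lt_le_trans s0_gt0 _; apply: s_nd.
by rewrite mulrC -ler_pdivrMr ?exprn_gt0 //; near: k; apply: (cvgryPge _).1.
Unshelve. all: end_near. Qed.

Lemma penalty_update_ge {rho s s' a : R} {b : bool} :
  1 < rho -> 0 < s -> (if b then s' = s else s' = Num.max (rho * s) a) ->
  s <= s' /\ (~~ b -> rho * s <= s').
Proof.
move=> rho_gt1 s_gt0; case: b => -> //; rewrite !le_max lexx.
by split=> //; rewrite ler_pMl // ltW.
Qed.

End real_sequences.

Section multipliers.
Context {R : realType} {n : nat}.

Lemma norm2_sqr_scaled_increment_le {a b r : 'rV[R]_n} {s C : R} :
  0 < s -> b = a + s *: r -> norm2 a ^+ 2 <= C * s -> norm2 b ^+ 2 <= C * s ->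
  norm2 r ^+ 2 <= 4 * C / s.
Proof.
move=> s_gt0 -> a_le b_le; rewrite ler_pdivlMr // -(ler_pM2l s_gt0).
have := norm2_sqrB_le (a + s *: r) a; rewrite addrAC subrr add0r norm2_sqrZ.
nra.
Qed.

Lemma multiplier_update_sqr_le {l v p : 'rV[R]_n} {s B : R} :
  0 < s -> s / 2 * norm2 (v + s^-1 *: l - p) ^+ 2 <= B ->
  norm2 (l + s *: (v - p)) ^+ 2 <= 2 * B * s.
Proof.
move=> s_gt0.
have -> : norm2 (l + s *: (v - p)) ^+ 2 = s ^+ 2 * norm2 (v + s^-1 *: l - p) ^+ 2.
  by rewrite -norm2_sqrZ !scalerDr scalerA mulfV ?gt_eqF // scale1r addrCA addrA.
nra.
Qed.

End multipliers.

Section ALM.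
Context {R : realType} {M : Type} {m q : nat}.
Context {f : M -> R} {h1 : M -> 'rV[R]_m} {h2 : M -> 'rV[R]_q} {psi : 'rV[R]_m -> R}.
Context {c alpha tau rho Phi : R}.
Context {x : nat -> M} {y : nat -> 'rV[R]_m} {z : nat -> 'rV[R]_q}.
Context {lam : nat -> 'rV[R]_m} {gam : nat -> 'rV[R]_q} {sig : nat -> R}.
Hypothesis Hc : forall (x : M) (y : 'rV[R]_m), c <= f x + psi y.
Hypothesis Htau : 0 < tau < 1.
Hypothesis Hrho : 1 < rho.
Hypothesis Hsig0 : 0 < sig 0%N.
Hypothesis Hsig1 : sig 1%N = sig 0%N.
Hypothesis Hy : forall k, is_prox psi (sig k) (h1 (x k) + (sig k)^-1 *: lam k) (y k).
Hypothesis Hz : forall k, is_proj_nonpos (h2 (x k) + (sig k)^-1 *: gam k) (z k).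
Hypothesis Hsub : forall k, (0 < k)%N ->
  subprob f psi h1 h2 (sig k) (lam k) (gam k) (x k) <= Phi.
Hypothesis Hlam : forall k, (0 < k)%N -> lam k.+1 = lam k + sig k *: (h1 (x k) - y k).
Hypothesis Hgam : forall k, (0 < k)%N -> gam k.+1 = gam k + sig k *: (h2 (x k) - z k).
Hypothesis Hsig : forall k, (0 < k)%N ->
  if alm_delta h1 h2 x y z k <= tau * alm_delta h1 h2 x y z k.-1
  then sig k.+1 = sig k
  else sig k.+1 = Num.max (rho * sig k)
                   (Num.max (norm2 (lam k.+1) `^ (1 + alpha))
                            (norm2 (gam k.+1) `^ (1 + alpha))).

Let del := alm_delta h1 h2 x y z.
Let u1 k := h1 (x k) + (sig k)^-1 *: lam k.
Let u2 k := h2 (x k) + (sig k)^-1 *: gam k.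

Lemma alm_sig_gt0 k : 0 < sig k.
Proof.
elim: k => [|[|k] IHk] //; first by rewrite Hsig1.
exact: lt_le_trans IHk (penalty_update_ge Hrho IHk (Hsig k.+1 isT)).1.
Qed.

Lemma alm_sig_nondecreasing : nondecreasing_seq sig.
Proof.
apply/nondecreasing_seqP => -[|k]; first by rewrite Hsig1.
exact: (penalty_update_ge Hrho (alm_sig_gt0 _) (Hsig k.+1 isT)).1.
Qed.

Lemma alm_delta_or_sig k :
  del k.+1 <= tau * del k \/ rho * sig k.+1 <= sig k.+2.
Proof.
have [_] := penalty_update_ge Hrho (alm_sig_gt0 k.+1) (Hsig k.+1 isT).
by case: (del k.+1 <= _) => [_|/(_ isT)]; [left | right].
Qed.

Lemma alm_subprob_bound k : (0 < k)%N ->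
  sig k / 2 * norm2 (u1 k - y k) ^+ 2 <= Phi - c /\
  sig k / 2 * norm2 (u2 k - z k) ^+ 2 <= Phi - c.
Proof.
move=> k_gt0; have := Hsub k k_gt0; rewrite /subprob.
have sk_ge0 : 0 <= sig k / 2 by rewrite divr_ge0 ?ltW ?alm_sig_gt0.
have := moreau_ge_prox (Hy k); have := moreau_nonpos_ge_proj (ltW (alm_sig_gt0 k)) (Hz k).
have := mulr_ge0 sk_ge0 (sqr_ge0 (norm2 (u1 k - y k))).
have := mulr_ge0 sk_ge0 (sqr_ge0 (norm2 (u2 k - z k))).
have := Hc (x k) (y k); rewrite /u1 /u2; lra.
Qed.

Lemma alm_bound_gap_ge0 : 0 <= Phi - c.
Proof.
apply: le_trans (alm_subprob_bound 1 isT).1.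
by rewrite mulr_ge0 ?sqr_ge0 ?divr_ge0 ?ltW ?alm_sig_gt0.
Qed.

Lemma alm_lam_bound k : (0 < k)%N -> norm2 (lam k.+1) ^+ 2 <= 2 * (Phi - c) * sig k.
Proof.
move=> k_gt0; rewrite Hlam //.
exact: multiplier_update_sqr_le (alm_sig_gt0 k) (alm_subprob_bound k k_gt0).1.
Qed.

Lemma alm_gam_bound k : (0 < k)%N -> norm2 (gam k.+1) ^+ 2 <= 2 * (Phi - c) * sig k.
Proof.
move=> k_gt0; rewrite Hgam //.
exact: multiplier_update_sqr_le (alm_sig_gt0 k) (alm_subprob_bound k k_gt0).2.
Qed.

Lemma alm_delta_sqr_le k : (1 < k)%N -> del k ^+ 2 <= 4 * (2 * (Phi - c)) / sig k.
Proof.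
case: k => [|[|k]] // _.
have sig_le := ler_wpM2l (mulr_ge0 (ler0n _ 2) alm_bound_gap_ge0)
  (alm_sig_nondecreasing _ _ (leqnSn k.+1)).
have r1_le := norm2_sqr_scaled_increment_le (alm_sig_gt0 k.+2) (Hlam k.+2 isT)
  (le_trans (alm_lam_bound k.+1 isT) sig_le) (alm_lam_bound k.+2 isT).
have r2_le := norm2_sqr_scaled_increment_le (alm_sig_gt0 k.+2) (Hgam k.+2 isT)
  (le_trans (alm_gam_bound k.+1 isT) sig_le) (alm_gam_bound k.+2 isT).
by rewrite /del /alm_delta maxEle; case: ifP.
Qed.

Lemma alm_delta_cvg0 : del @ \oo --> 0.
Proof.
have [tau_gt0 tau_lt1] := andP Htau.
apply: (safeguarded_penalty_cvg0 _ Hrho Hsig0 alm_sig_nondecreasing _ _ alm_delta_or_sig).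
- by rewrite ltW.
- by move=> k; rewrite /del /alm_delta le_max norm2_ge0.
- by near=> k; apply: alm_delta_sqr_le; near: k; exact: nbhs_infty_gt.
Unshelve. all: end_near. Qed.

Lemma alm_residuals_cvg0 :
  (fun k => norm2 (h1 (x k) - y k)) @ \oo --> 0 /\
  (fun k => norm2 (h2 (x k) - z k)) @ \oo --> 0.
Proof.
split; apply: (squeeze_cvgr (f := cst 0) (h := del));
  do ?[exact: cvg_cst | exact: alm_delta_cvg0];
  by apply: nearW => k; rewrite /= norm2_ge0 /del /alm_delta le_max lexx ?orbT.
Qed.

End ALM.

Section limit_points.
Context {R : realType}.

Lemma cvg_subseq {T : topologicalType} {u : nat -> T} {phi : nat -> nat} {l : T} :
  (forall n, phi n < phi n.+1)%N -> u @ \oo --> l -> u \o phi @ \oo --> l.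
Proof.
move=> phi_incr u_l; apply: cvg_comp u_l; apply/cvgnyPge => N.
have phi_ge n : (n <= phi n)%N by elim: n => // n /leq_ltn_trans; apply.
by exists N => // n /= /leq_trans; apply.
Qed.

Lemma cvg_norm2_residual {T : Type} {F : set_system T} {FF : Filter F} {n : nat}
    {a b : T -> 'rV[R]_n} {l : 'rV[R]_n} :
  a @ F --> l -> (fun t => norm2 (a t - b t)) @ F --> 0 -> b @ F --> l.
Proof.
move=> a_l res0; have -> : b = a - (a - b) by apply/funext => t /=; rewrite opprB addrC subrK.
rewrite -[l]subr0; apply: cvgB => //; apply/norm_cvg0P.
apply: (squeeze_cvgr (f := cst 0) (h := fun t => norm2 (a t - b t))) res0.
- by apply: nearW => t /=; rewrite normr_ge0 mx_norm_le_norm2.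
- exact: cvg_cst.
Qed.

Lemma cvg_nonpos {T : Type} {F : set_system T} {FF : ProperFilter F} {n : nat}
    {u : T -> 'rV[R]_n} {l : 'rV[R]_n} :
  u @ F --> l -> (\forall t \near F, nonpos (u t)) -> nonpos l.
Proof.
move=> u_l u_le0 i.
apply: (closed_cvg _ (@closed_le R 0) _ _
  (cvg_comp _ _ u_l (@coord_continuous _ _ _ ord0 i l))).
by apply: filterS u_le0 => t; apply.
Qed.

Lemma cluster_acc_point {T : pseudoMetricType R} (u : nat -> T) (a : T) :
  cluster (u @ \oo) a -> acc_point u a.
Proof.
move=> a_cluster.
have close_late (jN : nat * nat) : exists k, (jN.2 < k)%N /\ ball a (jN.1.+1%:R^-1) (u k).
  have a_ball : nbhs a (ball a (jN.1.+1%:R^-1)) by apply: nbhsx_ballx; rewrite invr_gt0.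
  have late : (u @ \oo) [set u k | k in [set k | (jN.2 < k)%N]].
    by exists jN.2.+1 => // k /= jN_k; exists k.
  by have [_ [[k /= jN_k <-] ak]] := a_cluster _ _ late a_ball; exists k.
have [g g_spec] := choice close_late.
pose fix phi j := if j is j'.+1 then g (j, phi j') else g (0%N, 0%N).
have phi_ball j : ball a (j.+1%:R^-1) (u (phi j)).
  by case: j => [|j]; [exact: (g_spec (0, 0)%N).2 | exact: (g_spec (j.+1, _)).2].
exists phi; split=> [j|]; first exact: (g_spec (j.+1, phi j)).1.
apply/cvg_ballP => e e_gt0; near=> j; apply: le_ball (phi_ball j).
rewrite -[e]invrK lef_pV2 ?posrE ?invr_gt0 ?ltr0n //.
apply/ltW/(lt_le_trans (archi_boundP _)); first by rewrite invr_ge0 ltW.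
by rewrite ler_nat; apply: leqW; near: j; exact: nbhs_infty_ge.
Unshelve. all: end_near. Qed.

Lemma compact_acc_point {T : pseudoMetricType R} (u : nat -> T) :
  compact [set: T] -> exists a, acc_point u a.
Proof.
move=> T_compact; have [a [_ a_cluster]] := T_compact (u @ \oo) _ filterT.
by exists a; exact: cluster_acc_point.
Qed.

End limit_points.

Theorem theorem3p1 (R : realType) (M : pseudoMetricType R) (m q : nat)
  (f : M -> R) (h1 : M -> 'rV[R]_m) (h2 : M -> 'rV[R]_q) (psi : 'rV[R]_m -> R)
  (rgrad_norm : (M -> R) -> M -> R)
  (Hf : continuous f) (Hh1 : continuous h1) (Hh2 : continuous h2)
  (Hpsi : convex_fun psi)
  (Hbdd : exists c : R, forall (x : M) (y : 'rV[R]_m), c <= f x + psi y)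
  (alpha tau rho Phi : R) (eps : nat -> R) (xfeas : M)
  (x : nat -> M) (y : nat -> 'rV[R]_m) (z : nat -> 'rV[R]_q)
  (lam : nat -> 'rV[R]_m) (gam : nat -> 'rV[R]_q) (sig : nat -> R)
  (Halpha : 0 < alpha < 1) (Htau : 0 < tau < 1) (Hrho : 1 < rho)
  (Hsig0 : 0 < sig 0%N)
  (Heps : forall k, 0 <= eps k) (Heps0 : eps @ \oo --> 0)
  (Hgam0 : forall i, 0 <= gam 0%N ord0 i)
  (Hlam1 : lam 1%N = lam 0%N) (Hgam1 : gam 1%N = gam 0%N) (Hsig1 : sig 1%N = sig 0%N)
  (Hy : forall k, is_prox psi (sig k) (h1 (x k) + (sig k)^-1 *: lam k) (y k))
  (Hz : forall k, is_proj_nonpos (h2 (x k) + (sig k)^-1 *: gam k) (z k))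
  (Hfeas : nonpos (h2 xfeas))
  (HPhi1 : f xfeas + psi (h1 xfeas) <= Phi)
  (HPhi2 : aug_lag f psi h1 h2 (sig 0%N) (x 0%N) (y 0%N) (z 0%N) (lam 0%N) (gam 0%N) <= Phi)
  (Hsub : forall k, (0 < k)%N ->
     rgrad_norm (subprob f psi h1 h2 (sig k) (lam k) (gam k)) (x k) < eps k /\
     subprob f psi h1 h2 (sig k) (lam k) (gam k) (x k) <= Phi)
  (Hlam : forall k, (0 < k)%N -> lam k.+1 = lam k + sig k *: (h1 (x k) - y k))
  (Hgam : forall k, (0 < k)%N -> gam k.+1 = gam k + sig k *: (h2 (x k) - z k))
  (Hsig : forall k, (0 < k)%N ->
     if alm_delta h1 h2 x y z k <= tau * alm_delta h1 h2 x y z k.-1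
     then sig k.+1 = sig k
     else sig k.+1 = Num.max (rho * sig k)
                      (Num.max (norm2 (lam k.+1) `^ (1 + alpha))
                               (norm2 (gam k.+1) `^ (1 + alpha)))) :
  (fun k => norm2 (h1 (x k) - y k) + norm2 (h2 (x k) - z k)) @ \oo --> 0
  /\ (forall xs : M, acc_point x xs ->
        acc_point (fun k => (x k, y k, z k)) (xs, h1 xs, h2 xs) /\ nonpos (h2 xs))
  /\ (compact [set: M] -> exists xs : M, acc_point x xs).
Proof.
have [c Hc] := Hbdd.
have [r1_cvg0 r2_cvg0] := alm_residuals_cvg0 Hc Htau Hrho Hsig0 Hsig1 Hy Hz
  (fun k k_gt0 => (Hsub k k_gt0).2) Hlam Hgam Hsig.
split; first by rewrite -[0]addr0; exact: cvgD.
split; last exact: compact_acc_point.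
move=> xs [phi [phi_incr x_xs]].
have y_xs : y \o phi @ \oo --> h1 xs.
  exact: cvg_norm2_residual (cvg_comp _ _ x_xs (Hh1 xs)) (cvg_subseq phi_incr r1_cvg0).
have z_xs : z \o phi @ \oo --> h2 xs.
  exact: cvg_norm2_residual (cvg_comp _ _ x_xs (Hh2 xs)) (cvg_subseq phi_incr r2_cvg0).
split; first by exists phi; split=> //; exact: cvg_pair (cvg_pair x_xs y_xs) z_xs.
by apply: (cvg_nonpos z_xs); apply: nearW => k; exact: (Hz (phi k)).1.
Qed.
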